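(* Let $n\ge2$, let $P$ and $H$ be partial $n$-Metrics on sets $X$ and $Y$ respectively, and let $f,g:X\to Y$. Suppose there are real numbers $r$, $A\ge0$ and $0<c<1$ such that for every $x\in X$ there exists $z\in X$ with $$H(\langle f(z)\rangle^{n-1},g(z))-H(\langle f(z)\rangle^n)\le c\big[H(\langle f(x)\rangle^{n-1},g(x))-H(\langle f(x)\rangle^n)\big]$$ and $$r\le P(\langle z\rangle^n)\le P(\langle z\rangle^{n-1},x)\le r+A\big[H(\langle f(x)\rangle^{n-1},g(x))-H(\langle f(x)\rangle^n)\big]$$ (i.e. $f$ and $g$ are $f$-mutually $c_r$-contractive). Then there exists a Cauchy sequence $\{x_i\}_{i\in\mathbb{N}}$ in $X$ with central distance $r$ such that $r\le P(\langle x_i\rangle^n)$ for all $i$, and such that for every $\epsilon>0$ there is $N\in\mathbb{N}$ with $H(\langle f(x_i)\rangle^{n-1},g(x_i))-H(\langle f(x_i)\rangle^n)<\epsilon$ for all $i>N$.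
   Context: Notation: $\langle a\rangle^k$ denotes the $k$-tuple $(a,\dots,a)$ inserted into an argument list. A partial $n$-Metric on a set $X$ is a function $P:X^n\to\mathbb{R}$ such that for all $x_1,\dots,x_n,a\in X$: (1) $P(\langle x_1\rangle^n)\le P(\langle x_1\rangle^{n-1},x_2)$; (2) $P$ is invariant under permutations of its arguments; (3) $P(\langle x_1\rangle^{n-1},x_2)=P(\langle x_1\rangle^n)$ and $P(\langle x_2\rangle^{n-1},x_1)=P(\langle x_2\rangle^n)$ iff $x_1=x_2$; (4) $P(x_1,\dots,x_n)\le P(x_1,\dots,x_{n-1},a)+P(\langle a\rangle^{n-1},x_n)-P(\langle a\rangle^n)$. A sequence $\{x_i\}$ is Cauchy with central distance $r$ if for every $\epsilon>0$ there is $N$ with $|P(x_{i_1},\dots,x_{i_n})-r|<\epsilon$ for all $i_1,\dots,i_n>N$. *)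

From Stdlib Require Import Reals List Permutation.
Open Scope R_scope.

(* A partial n-Metric on X: P is a function on n-tuples, represented as
   lists of length n (values on lists of other lengths are irrelevant).
   <a>^k is [repeat a k]. *)
Definition is_partial_nMetric {X : Type} (n : nat) (P : list X -> R) : Prop :=
  (forall x1 x2 : X, P (repeat x1 n) <= P (repeat x1 (n - 1) ++ x2 :: nil)) /\
  (forall l l' : list X, length l = n -> Permutation l l' -> P l = P l') /\
  (forall x1 x2 : X,
      (P (repeat x1 (n - 1) ++ x2 :: nil) = P (repeat x1 n) /\
       P (repeat x2 (n - 1) ++ x1 :: nil) = P (repeat x2 n)) <-> x1 = x2) /\
  (forall (l : list X) (xn a : X), length l = (n - 1)%nat ->
      P (l ++ xn :: nil) <= P (l ++ a :: nil) + P (repeat a (n - 1) ++ xn :: nil)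
                             - P (repeat a n)).

Definition cauchy_central {X : Type} (n : nat) (P : list X -> R)
    (x : nat -> X) (r : R) : Prop :=
  forall eps : R, eps > 0 -> exists N : nat,
    forall idx : list nat, length idx = n -> Forall (fun i => (N < i)%nat) idx ->
      Rabs (P (map x idx) - r) < eps.

Definition fg_gap {X Y : Type} (n : nat) (H : list Y -> R) (f g : X -> Y) (x : X) : R :=
  H (repeat (f x) (n - 1) ++ g x :: nil) - H (repeat (f x) n).

(* Write D(x) for the f/g gap of x and z(x) for the point given by the contractivity hypothesis.
   Iterating z from any start gives a sequence with D(x_i) <= D(x_0) c^i, and the one-point
   distance d(a, b) = P(<a>^{n-1}, b) - P(<a>^n) between consecutive terms is at most
   A D(x_0) c^i.  Since d satisfies the triangle inequality, d(x_m, x_k) <= K c^k for m >= k,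
   with K = A D(x_0) / (1 - c).  Replacing the entries of <x_k>^n one at a time by later terms
   changes P by at most K c^k per entry, which squeezes every P(x_{i_1}, ..., x_{i_n}) with all
   i_j > k between r - n K c^k and r + (n + 1) K c^k. *)

From Stdlib Require Import Reals List Permutation.
From Stdlib Require Import IndefiniteDescription Lia Lra.
Open Scope R_scope.

Definition pdist {X : Type} (n : nat) (P : list X -> R) (a b : X) : R :=
  P (repeat a (n - 1) ++ b :: nil) - P (repeat a n).

Lemma fg_gap_pdist {X Y : Type} (n : nat) (H : list Y -> R) (f g : X -> Y) (x : X) :
  fg_gap n H f g x = pdist n H (f x) (g x).
Proof. reflexivity. Qed.

Lemma pow_le_pow_of_le1 (c : R) (k m : nat) :
  0 <= c -> c <= 1 -> (k <= m)%nat -> c ^ m <= c ^ k.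
Proof.
  intros c_ge0 c_le1 k_le_m.
  replace m with (k + (m - k))%nat by lia.
  rewrite pow_add.
  assert (0 <= c ^ k) by (apply pow_le; lra).
  assert (c ^ (m - k) <= 1) by (rewrite <- (pow1 (m - k)); apply pow_incr; lra).
  nra.
Qed.

Lemma geometric_eventually_lt (C c eps : R) :
  0 <= C -> 0 <= c < 1 -> 0 < eps ->
  exists N : nat, forall k : nat, (N <= k)%nat -> C * c ^ k < eps.
Proof.
  intros C_ge0 c_range eps_gt0.
  assert (Habs : Rabs c < 1) by (rewrite Rabs_right; lra).
  assert (y_gt0 : 0 < eps / (C + 1)) by (apply Rdiv_lt_0_compat; lra).
  destruct (pow_lt_1_zero c Habs _ y_gt0) as [N HN].
  exists N. intros k Hk.
  specialize (HN k Hk).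
  assert (ck_ge0 : 0 <= c ^ k) by (apply pow_le; lra).
  rewrite Rabs_right in HN by lra.
  apply Rmult_lt_compat_r with (r := C + 1) in HN; [|lra].
  unfold Rdiv in HN. rewrite Rmult_assoc, Rinv_l in HN by lra.
  nra.
Qed.

Lemma geometric_decay (d : nat -> R) (c : R) :
  0 <= c -> (forall i, d (S i) <= c * d i) -> forall i, d i <= d 0%nat * c ^ i.
Proof.
  intros c_ge0 d_step.
  induction i as [|i IH]; simpl; [lra|].
  specialize (d_step i).
  apply Rmult_le_compat_l with (r := c) in IH; [|exact c_ge0].
  lra.
Qed.

Section PartialNMetric.

Variables (X : Type) (n : nat) (P : list X -> R).
Hypothesis HP : is_partial_nMetric n P.

Lemma pdist_ge0 (a b : X) : 0 <= pdist n P a b.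
Proof. destruct HP as (diag_le & _). specialize (diag_le a b). unfold pdist. lra. Qed.

Lemma pdist_refl (a : X) : (1 <= n)%nat -> pdist n P a a = 0.
Proof.
  intros n_ge1. unfold pdist.
  rewrite <- repeat_cons. change (a :: repeat a (n - 1)) with (repeat a (S (n - 1))).
  replace (S (n - 1)) with n by lia.
  ring.
Qed.

Lemma nMetric_triangle_last (l : list X) (x y : X) :
  length l = (n - 1)%nat -> P (l ++ x :: nil) <= P (l ++ y :: nil) + pdist n P y x.
Proof.
  intros l_len. destruct HP as (_ & _ & _ & tri).
  specialize (tri l x y l_len). unfold pdist. lra.
Qed.

Lemma pdist_triangle (a b d : X) : pdist n P a d <= pdist n P a b + pdist n P b d.
Proof.
  pose proof (nMetric_triangle_last (repeat a (n - 1)) d b (repeat_length _ _)).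
  unfold pdist in *. lra.
Qed.

Lemma nMetric_move_last (l1 l2 : list X) (x : X) :
  length (l1 ++ x :: l2) = n -> P (l1 ++ x :: l2) = P ((l1 ++ l2) ++ x :: nil).
Proof.
  intros len. destruct HP as (_ & perm & _).
  apply perm; [exact len|].
  rewrite <- app_assoc. apply Permutation_app_head, Permutation_cons_append.
Qed.

Lemma nMetric_replace_head (a t : X) (m : nat) (u : list X) :
  length (repeat a m ++ t :: u) = n ->
  P (repeat a m ++ t :: u) <= P (repeat a (S m) ++ u) + pdist n P a t /\
  P (repeat a (S m) ++ u) <= P (repeat a m ++ t :: u) + pdist n P t a.
Proof.
  intros len.
  assert (len_a : length (repeat a m ++ a :: u) = n)
    by (rewrite length_app in *; simpl in *; exact len).
  assert (a_first : repeat a (S m) ++ u = repeat a m ++ a :: u)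
    by (change (repeat a (S m)) with (a :: repeat a m); rewrite repeat_cons, <- app_assoc; reflexivity).
  assert (l_len : length (repeat a m ++ u) = (n - 1)%nat)
    by (rewrite length_app in *; simpl in *; lia).
  rewrite a_first, (nMetric_move_last _ _ _ len), (nMetric_move_last _ _ _ len_a).
  split; apply nMetric_triangle_last; exact l_len.
Qed.

Lemma nMetric_le_repeat_add (a : X) (e : R) (u : list X) :
  (length u <= n)%nat -> Forall (fun t => pdist n P a t <= e) u ->
  P (repeat a (n - length u) ++ u) <= P (repeat a n) + INR (length u) * e.
Proof.
  induction u as [|t u IH]; intros u_len u_close.
  - simpl. rewrite Nat.sub_0_r, app_nil_r. lra.
  - inversion u_close as [|? ? t_close u_close']; subst. simpl length in *.
    replace (n - length u)%nat with (S (n - S (length u))) in IH by lia.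
    destruct (nMetric_replace_head a t (n - S (length u)) u) as [step _].
    { rewrite length_app, repeat_length. simpl. lia. }
    specialize (IH ltac:(lia) u_close').
    rewrite S_INR. lra.
Qed.

Lemma repeat_le_nMetric_add (a : X) (e : R) (u : list X) :
  (length u <= n)%nat -> Forall (fun t => pdist n P t a <= e) u ->
  P (repeat a n) <= P (repeat a (n - length u) ++ u) + INR (length u) * e.
Proof.
  induction u as [|t u IH]; intros u_len u_close.
  - simpl. rewrite Nat.sub_0_r, app_nil_r. lra.
  - inversion u_close as [|? ? t_close u_close']; subst. simpl length in *.
    replace (n - length u)%nat with (S (n - S (length u))) in IH by lia.
    destruct (nMetric_replace_head a t (n - S (length u)) u) as [_ step].
    { rewrite length_app, repeat_length. simpl. lia. }
    specialize (IH ltac:(lia) u_close').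
    rewrite S_INR. lra.
Qed.

End PartialNMetric.

Section GeometricSequence.

Variables (X : Type) (n : nat) (P : list X -> R).
Hypothesis HP : is_partial_nMetric n P.
Hypothesis n_ge1 : (1 <= n)%nat.

Variables (s : nat -> X) (r B c : R).
Hypotheses (B_ge0 : 0 <= B) (c_ge0 : 0 <= c) (c_lt1 : c < 1).
Hypothesis diag_ge : forall i, r <= P (repeat (s i) n).
Hypothesis succ_le : forall i, P (repeat (s (S i)) (n - 1) ++ s i :: nil) <= r + B * c ^ i.

Let K := B / (1 - c).

Let K_fixpoint : K * c + B = K.
Proof. unfold K. field. lra. Qed.

Let K_ge_B : B <= K.
Proof.
  unfold K, Rdiv. rewrite <- (Rmult_1_r B) at 1.
  apply Rmult_le_compat_l; [exact B_ge0|].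
  rewrite <- Rinv_1. apply Rinv_le_contravar; lra.
Qed.

Let c_pow_ge0 (k : nat) : 0 <= c ^ k.
Proof. apply pow_le; exact c_ge0. Qed.

Lemma pdist_succ_le (i : nat) : pdist n P (s (S i)) (s i) <= B * c ^ i.
Proof. specialize (diag_ge (S i)). specialize (succ_le i). unfold pdist. lra. Qed.

Lemma diag_succ_le (i : nat) : P (repeat (s (S i)) n) <= r + B * c ^ i.
Proof. destruct HP as (diag_le & _). specialize (diag_le (s (S i)) (s i)). specialize (succ_le i). lra. Qed.

Lemma pdist_geometric_le (k m : nat) : (k <= m)%nat -> pdist n P (s m) (s k) <= K * c ^ k.
Proof.
  intros k_le_m. replace m with (k + (m - k))%nat by lia.
  clear k_le_m. generalize (m - k)%nat as p. intros p. revert k.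
  induction p as [|p IH]; intros k.
  - rewrite Nat.add_0_r, pdist_refl by assumption.
    apply Rmult_le_pos; [lra | apply c_pow_ge0].
  - replace (k + S p)%nat with (S k + p)%nat by lia.
    pose proof (pdist_triangle X n P HP (s (S k + p)%nat) (s (S k)) (s k)).
    specialize (IH (S k)). pose proof (pdist_succ_le k).
    change (c ^ S k) with (c * c ^ k) in IH.
    assert (split_sum : K * (c * c ^ k) + B * c ^ k = (K * c + B) * c ^ k) by ring.
    rewrite K_fixpoint in split_sum.
    lra.
Qed.

Lemma nMetric_window_le (k : nat) (idx : list nat) :
  length idx = n -> Forall (fun j => (k < j)%nat) idx ->
  Rabs (P (map s idx) - r) <= (INR n + 1) * (K * c ^ k).
Proof.
  intros idx_len idx_gt.
  set (u := map s idx). set (e := K * c ^ k).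
  assert (u_len : length u = n) by (unfold u; rewrite length_map; exact idx_len).
  assert (e_ge0 : 0 <= e) by (apply Rmult_le_pos; [lra | apply c_pow_ge0]).
  assert (lower : P (repeat (s k) n) <= P u + INR n * e).
  { pose proof (repeat_le_nMetric_add X n P HP (s k) e u ltac:(lia)) as spread.
    rewrite u_len, Nat.sub_diag in spread. apply spread.
    unfold u. apply Forall_map. eapply Forall_impl; [|exact idx_gt].
    intros j k_lt_j. cbv beta in *. apply pdist_geometric_le. lia. }
  set (m := Nat.max k (list_max idx)).
  assert (idx_le : Forall (fun j => (j <= m)%nat) idx)
    by (apply list_max_le; unfold m; lia).
  assert (upper : P u <= P (repeat (s (S m)) n) + INR n * e).
  { pose proof (nMetric_le_repeat_add X n P HP (s (S m)) e u ltac:(lia)) as spread.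
    rewrite u_len, Nat.sub_diag in spread. apply spread.
    unfold u. apply Forall_map. rewrite Forall_forall in idx_le, idx_gt |- *.
    intros j j_in. specialize (idx_le j j_in). specialize (idx_gt j j_in).
    eapply Rle_trans; [apply pdist_geometric_le; lia|].
    apply Rmult_le_compat_l; [lra|]. apply pow_le_pow_of_le1; lia || lra. }
  assert (anchor : P (repeat (s (S m)) n) <= r + e).
  { eapply Rle_trans; [apply diag_succ_le|].
    assert (c ^ m <= c ^ k) by (apply pow_le_pow_of_le1; unfold m; lia || lra).
    unfold e. pose proof (c_pow_ge0 m). nra. }
  specialize (diag_ge k). apply Rabs_le. lra.
Qed.

Lemma cauchy_central_geometric : cauchy_central n P s r.
Proof.
  intros eps eps_gt0.
  assert (K_ge0 : 0 <= K) by lra.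
  destruct (geometric_eventually_lt ((INR n + 1) * K) c eps) as [N HN];
    [pose proof (pos_INR n); nra | lra | lra |].
  exists N. intros idx idx_len idx_gt.
  specialize (HN N (le_n N)).
  eapply Rle_lt_trans; [exact (nMetric_window_le N idx idx_len idx_gt)|].
  lra.
Qed.

End GeometricSequence.

Theorem theorem5p14 (X Y : Type) (n : nat) (P : list X -> R) (H : list Y -> R)
  (f g : X -> Y) (r A c : R) :
  (2 <= n)%nat -> inhabited X ->
  is_partial_nMetric n P -> is_partial_nMetric n H ->
  0 <= A -> 0 < c -> c < 1 ->
  (forall x : X, exists z : X,
      fg_gap n H f g z <= c * fg_gap n H f g x /\
      r <= P (repeat z n) /\
      P (repeat z n) <= P (repeat z (n - 1) ++ x :: nil) /\
      P (repeat z (n - 1) ++ x :: nil) <= r + A * fg_gap n H f g x) ->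
  exists xs : nat -> X,
    cauchy_central n P xs r /\
    (forall i : nat, r <= P (repeat (xs i) n)) /\
    (forall eps : R, eps > 0 -> exists N : nat,
        forall i : nat, (N < i)%nat -> fg_gap n H f g (xs i) < eps).
Proof.
  intros n_ge2 [x0] HP HH A_ge0 c_gt0 c_lt1 contractive.
  destruct (functional_choice _ contractive) as [z z_spec].
  set (xs := fun i => Nat.iter (S i) z x0).
  set (D := fg_gap n H f g).
  assert (D_ge0 : forall x, 0 <= D x)
    by (intro x; unfold D; rewrite fg_gap_pdist; apply pdist_ge0, HH).
  assert (D_decay : forall i, D (xs i) <= D (xs 0%nat) * c ^ i)
    by (apply geometric_decay; [lra | intro i; apply (z_spec (xs i))]).
  assert (diag_ge : forall i, r <= P (repeat (xs i) n))
    by (intro i; apply (z_spec (Nat.iter i z x0))).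
  exists xs. split; [|split; [exact diag_ge|]].
  - apply (cauchy_central_geometric X n P HP ltac:(lia) xs r (A * D (xs 0%nat)) c);
      [apply Rmult_le_pos; auto | lra | lra | exact diag_ge |].
    intro i. change (xs (S i)) with (z (xs i)).
    destruct (z_spec (xs i)) as (_ & _ & _ & step). fold D in step.
    pose proof (Rmult_le_compat_l A _ _ A_ge0 (D_decay i)) as A_decay.
    rewrite <- Rmult_assoc in A_decay. lra.
  - intros eps eps_gt0.
    destruct (geometric_eventually_lt (D (xs 0%nat)) c eps) as [N HN]; auto; [lra|].
    exists N. intros i i_gt. specialize (D_decay i). specialize (HN i ltac:(lia)). lra.
Qed.
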